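(* Let $\mathcal{X}=\{v_1,\dots,v_N\}$ be the node set of a soft tree, i.e. a directed graph whose adjacency matrix $A\in[0,1]^{N\times N}$ is strictly upper triangular and satisfies $A^\top 1_N=(0,1,\dots,1)^\top$, with leaf set $\mathcal{X}_{\rm leaf}$, and let $w=(w_v)_{v\in\mathcal{X}}$ be positive weights. Then the relaxed Tree-Wasserstein distance $W^{\rm relax}_{d_\mathcal{X}}$ is a metric on the set of probability measures supported on $\mathcal{X}_{\rm leaf}$. Moreover, when $A\in\{0,1\}^{N\times N}$ (so that $\mathcal{X}$ is a directed rooted tree with root $v_1$), $W^{\rm relax}_{d_\mathcal{X}}(\mu,\nu)$ equals the Tree-Wasserstein distance, i.e. the 1-Wasserstein distance between $\mu$ and $\nu$ with respect to the tree metric $d_\mathcal{X}$ in which the edge whose deeper endpoint is $v$ has length $w_v$; equivalently $W^{\rm relax}_{d_\mathcal{X}}(\mu,\nu)=\sum_{v\in\mathcal{X}}w_v|\mu(\Gamma(v))-\nu(\Gamma(v))|$, where $\Gamma(v)$ is the set of nodes in the subtree rooted at $v$.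
   Context: As in the setting of SEAL, the nodes are ordered with latent (internal) labels first and observed labels last, $A=\begin{pmatrix}A_1&A_2\\0&0\end{pmatrix}$, and the observed labels form the leaf set $\mathcal{X}_{\rm leaf}$. Set $\alpha=(I-A)^{-1}=\sum_{k\ge0}A^k$ with entries $\alpha_{vx}$. For probability measures $\mu,\nu$ supported on $\mathcal{X}_{\rm leaf}$, the relaxed Tree-Wasserstein distance is $W^{\rm relax}_{d_\mathcal{X}}(\mu,\nu)=\sum_{v\in\mathcal{X}} w_v\left|\sum_{x\in\mathcal{X}_{\rm leaf}}\alpha_{vx}(\mu(x)-\nu(x))\right|$. The tree metric $d_\mathcal{X}(a,b)$ is the length (sum of edge weights) of the path between $a$ and $b$, and the 1-Wasserstein distance is $\min_{\pi\in\Pi(\mu,\nu)}\sum_{a,b} d_\mathcal{X}(a,b)\pi(a,b)$ over couplings $\pi$ of $\mu,\nu$. *)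

From HB Require Import structures.
From mathcomp Require Import all_boot all_order all_algebra.
Set Implicit Arguments. Unset Strict Implicit. Unset Printing Implicit Defensive.
Import Order.TTheory GRing.Theory Num.Theory.
Local Open Scope ring_scope.

Section Defs.
Variable R : realFieldType.
Variable N : nat.

(* Soft tree on nodes 'I_N (node v_{k+1} is index k, root v_1 is index 0):
   entries in [0,1], strictly upper triangular, A^T 1 = (0,1,...,1)^T. *)
Definition soft_tree (A : 'M[R]_N) : Prop :=
  [/\ forall i j, 0 <= A i j <= 1,
      forall i j : 'I_N, (j <= i)%N -> A i j = 0 &
      forall j : 'I_N, \sum_i A i j = (if val j == 0%N then 0 else 1)].

(* SEAL ordering: the first n nodes are latent, the remaining ones are the
   observed labels (leaves), and the rows of A at leaves vanish:
   A = (A1 A2 ; 0 0). *)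
Definition is_leaf (n : nat) (x : 'I_N) : bool := (n <= x)%N.

Definition leaf_rows_zero (n : nat) (A : 'M[R]_N) : Prop :=
  forall i j, is_leaf n i -> A i j = 0.

Definition alpha (A : 'M[R]_N) : 'M[R]_N := invmx (1%:M - A).

Definition prob_on_leaves (n : nat) (mu : 'I_N -> R) : Prop :=
  [/\ forall x, 0 <= mu x, \sum_x mu x = 1 &
      forall x, ~~ is_leaf n x -> mu x = 0].

Definition W_relax (n : nat) (A : 'M[R]_N) (w : 'I_N -> R)
    (mu nu : 'I_N -> R) : R :=
  \sum_v w v * `| \sum_(x | is_leaf n x) alpha A v x * (mu x - nu x) |.

Definition Gamma (A : 'M[R]_N) (v : 'I_N) : {set 'I_N} :=
  [set x | connect (fun u y => A u y == 1) v x].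

(* tree metric: the edge whose deeper endpoint is v (length w v) lies on
   the path between a and b iff exactly one of a, b lies in Gamma(v). *)
Definition tree_dist (A : 'M[R]_N) (w : 'I_N -> R) (a b : 'I_N) : R :=
  \sum_v w v * ((a \in Gamma A v) != (b \in Gamma A v))%:R.

Definition coupling (mu nu : 'I_N -> R) (pi : 'I_N -> 'I_N -> R) : Prop :=
  [/\ forall a b, 0 <= pi a b,
      forall a, \sum_b pi a b = mu a &
      forall b, \sum_a pi a b = nu b].

Definition transport_cost (d : 'I_N -> 'I_N -> R) (pi : 'I_N -> 'I_N -> R) : R :=
  \sum_a \sum_b d a b * pi a b.

Definition is_W1 (d : 'I_N -> 'I_N -> R) (mu nu : 'I_N -> R) (c : R) : Prop :=
  (exists pi, coupling mu nu pi /\ transport_cost d pi = c) /\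
  (forall pi, coupling mu nu pi -> c <= transport_cost d pi).

End Defs.

From HB Require Import structures.
From mathcomp Require Import all_boot all_order all_algebra.
From Stdlib Require Import FunctionalExtensionality.
From mathcomp Require Import zify lra.
Set Implicit Arguments. Unset Strict Implicit. Unset Printing Implicit Defensive.
Import Order.TTheory GRing.Theory Num.Theory.
Local Open Scope ring_scope.

(* Since A is strictly upper triangular, I - A is invertible, and the rows of
   alpha = (I - A)^-1 at the leaves are unit vectors because those rows of A
   vanish.  Hence W_relax is a weighted sum of seminorms of mu - nu in which the
   leaf coordinates themselves occur, so it is a metric.
   For a 0/1 matrix, alpha v x is the indicator of x \in Gamma(v), so W_relax is
   the sum of w_v |mu(Gamma v) - nu(Gamma v)|.  Each term bounds from below the
   mass a coupling moves across the edge above v, and a greedy coupling meets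
   all these bounds at once: always match a point a of supp mu with a point b of
   supp nu that lie in as many common subtrees as possible.  Since subtrees form
   a laminar family, a subtree containing exactly one of a and b carries no mass
   of the other measure, so the matched mass crosses only edges it must cross. *)

Section StrictlyUpperTriangular.
Variables (R : comUnitRingType) (N : nat) (A : 'M[R]_N).
Hypothesis A_strict_upper : forall i j : 'I_N, (j <= i)%N -> A i j = 0.

Lemma unitmx_1B_strict_upper : (1%:M - A) \in unitmx.
Proof.
rewrite unitmxE -det_tr det_trig.
  by rewrite big1 ?unitr1 // => i _; rewrite !mxE A_strict_upper // eqxx subr0.
apply/is_trig_mxP => i j ij; rewrite !mxE A_strict_upper ?(ltnW ij) //.
by rewrite subr0 -val_eqE /= gtn_eqF.
Qed.

Lemma invmx_1B_zero_row (v : 'I_N) :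
  (forall j, A v j = 0) -> forall x, invmx (1%:M - A) v x = (v == x)%:R.
Proof.
move=> Av0 x.
have := congr1 (fun M : 'M[R]_N => M v x) (mulmxV unitmx_1B_strict_upper).
rewrite mulmxBl mul1mx !mxE => <-.
by rewrite big1 ?subr0 // => u _; rewrite Av0 mul0r.
Qed.

End StrictlyUpperTriangular.

Section RelaxedMetric.
Variables (R : realFieldType) (N n : nat) (A : 'M[R]_N) (w : 'I_N -> R).
Implicit Types mu nu rho : 'I_N -> R.


Lemma W_relax_ge0 mu nu : (forall v, 0 <= w v) -> 0 <= W_relax n A w mu nu.
Proof. by move=> w0; apply: sumr_ge0 => v _; rewrite mulr_ge0. Qed.

Lemma W_relax_sym mu nu : W_relax n A w mu nu = W_relax n A w nu mu.
Proof.
apply: eq_bigr => v _; rewrite -normrN -sumrN.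
by congr (_ * `|_|); apply: eq_bigr => x _; rewrite -mulrN opprB.
Qed.

Lemma W_relax_xx mu : W_relax n A w mu mu = 0.
Proof.
by rewrite /W_relax big1 // => v _; rewrite big1 ?normr0 ?mulr0 // => x _; rewrite subrr mulr0.
Qed.

Lemma W_relax_triangle mu nu rho : (forall v, 0 <= w v) ->
  W_relax n A w mu rho <= W_relax n A w mu nu + W_relax n A w nu rho.
Proof.
move=> w0; rewrite -big_split /=; apply: ler_sum => v _.
rewrite -mulrDr ler_wpM2l // (eq_bigr (fun x =>
  alpha A v x * (mu x - nu x) + alpha A v x * (nu x - rho x))) => [|x _].
  by rewrite big_split ler_normD.
by rewrite -mulrDr addrA subrK.
Qed.

Lemma W_relax_eq0 mu nu : soft_tree A -> leaf_rows_zero n A ->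
  (forall v, 0 < w v) -> W_relax n A w mu nu = 0 -> {in is_leaf n, mu =1 nu}.
Proof.
move=> [_ A_up _] lz w_gt0 /eqP W0 x lx; apply/eqP; rewrite -subr_eq0.
have alpha_x y : alpha A x y = (x == y)%:R.
  exact: (invmx_1B_zero_row A_up (fun j => lz x j lx) y).
move: W0; rewrite psumr_eq0 => [/allP/(_ x (mem_index_enum x))|v _]; last first.
  by rewrite mulr_ge0 // ltW.
rewrite mulf_eq0 gt_eqF //= normr_eq0 (bigD1 x) //= big1 => [|y /andP[_ yx]].
  by rewrite alpha_x eqxx mul1r addr0.
by rewrite alpha_x eq_sym (negbTE yx) mul0r.
Qed.

Lemma eq_on_leaves mu nu :
  (forall x, ~~ is_leaf n x -> mu x = 0) -> (forall x, ~~ is_leaf n x -> nu x = 0) ->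
  {in is_leaf n, mu =1 nu} -> mu = nu.
Proof.
move=> muL nuL eq_leaves; apply: functional_extensionality => x.
by have [/eq_leaves|/[dup]/muL -> /nuL ->] := boolP (is_leaf n x).
Qed.

End RelaxedMetric.

Section PointMassShift.
Variables (R : realFieldType) (T : finType).

Definition supp (f : T -> R) : {set T} := [set x | f x != 0].

Lemma sumr_delta (P : pred T) (a : T) : \sum_(x | P x) (x == a)%:R = (P a)%:R :> R.
Proof.
rewrite big_mkcond (bigD1 a) //= eqxx big1 ?addr0 => [|x /negbTE xa].
  by case: (P a).
by rewrite xa; case: (P x).
Qed.

Lemma ler_term_sum (S : {set T}) (f : T -> R) x :
  (forall y, 0 <= f y) -> x \in S -> f x <= \sum_(y in S) f y.
Proof. by move=> f0 xS; rewrite (bigD1 x) //= lerDl sumr_ge0. Qed.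

Lemma subr_delta_ge0 (f : T -> R) a t :
  (forall x, 0 <= f x) -> t <= f a -> forall x, 0 <= f x - t * (x == a)%:R.
Proof.
move=> f0 tfa x; case: (x =P a) => [->|_]; first by rewrite mulr1 subr_ge0.
by rewrite mulr0 subr0.
Qed.

Lemma card_supp_subr_delta (f : T -> R) a t : f a != 0 ->
  (#|supp (fun x => f x - t * (x == a)%:R)%R| + (t == f a) <= #|supp f|)%N.
Proof.
move=> fa0.
have sub : supp (fun x => f x - t * (x == a)%:R) \subset supp f.
  apply/subsetP => x; rewrite /supp !inE.
  by case: (x =P a) => [->|_]; rewrite ?fa0 // mulr0 subr0.
case: eqP => [tfa|_]; last by rewrite addn0 subset_leq_card.
rewrite addn1 proper_card //; apply/properP; split => //.
by exists a; rewrite /supp !inE ?fa0 // eqxx mulr1 tfa subrr eqxx.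
Qed.

Lemma norm_mass_subr_delta (S : {set T}) (mu nu : T -> R) a b t :
  (forall x, 0 <= mu x) -> (forall x, 0 <= nu x) -> t <= mu a -> t <= nu b ->
  (a \in S -> b \notin S -> {in S, forall x, nu x = 0}) ->
  (b \in S -> a \notin S -> {in S, forall x, mu x = 0}) ->
  `|\sum_(x in S) mu x - \sum_(x in S) nu x| =
  `|\sum_(x in S) (mu x - t * (x == a)%:R) - \sum_(x in S) (nu x - t * (x == b)%:R)|
    + t * ((a \in S) != (b \in S))%:R.
Proof.
move=> mu0 nu0 t_mu t_nu sep_a sep_b.
rewrite !sumrB -!mulr_sumr !sumr_delta.
have [aS|aS] := boolP (a \in S); have [bS|bS] := boolP (b \in S).
- by rewrite mulr1 mulr0 addr0 opprB addrA subrK.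
- rewrite [\sum_(x in S) nu x]big1 => [|x]; last exact: sep_a.
  have mu_S := ler_term_sum mu0 aS.
  rewrite mulr1 mulr0 !subr0 !ger0_norm ?subrK ?subr_ge0 //.
    exact: le_trans t_mu mu_S.
  exact: le_trans (mu0 a) mu_S.
- rewrite [\sum_(x in S) mu x]big1 => [|x]; last exact: sep_b.
  have nu_S := ler_term_sum nu0 bS.
  rewrite mulr1 mulr0 subr0 !sub0r !normrN !ger0_norm ?subrK ?subr_ge0 //.
    exact: le_trans t_nu nu_S.
  exact: le_trans (nu0 b) nu_S.
- by rewrite !mulr0 !subr0 addr0.
Qed.

End PointMassShift.

Section Couplings.
Variables (R : realFieldType) (N : nat).
Implicit Types (mu nu : 'I_N -> R) (pi : 'I_N -> 'I_N -> R) (S : {set 'I_N}).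

Definition cut_flow S pi : R :=
  \sum_a \sum_b ((a \in S) != (b \in S))%:R * pi a b.

Lemma cut_flowD S pi pi' :
  cut_flow S (fun a b => pi a b + pi' a b) = cut_flow S pi + cut_flow S pi'.
Proof.
rewrite /cut_flow -big_split; apply: eq_bigr => a _.
by rewrite -big_split; apply: eq_bigr => b _; rewrite mulrDr.
Qed.

Lemma cut_flow_delta S a b t :
  cut_flow S (fun x y => t * ((x == a) && (y == b))%:R) =
  t * ((a \in S) != (b \in S))%:R.
Proof.
rewrite /cut_flow (bigD1 a) //= [X in _ + X]big1 => [|x /negbTE xa]; last first.
  by rewrite big1 // => y _; rewrite xa /= !mulr0.
rewrite addr0 (bigD1 b) //= [X in _ + X]big1 => [|y /negbTE yb].
  by rewrite !eqxx addr0 mulr1 mulrC.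
by rewrite yb andbF !mulr0.
Qed.

Lemma coupling_cut_flow_ge mu nu pi S : coupling mu nu pi ->
  `|\sum_(x in S) mu x - \sum_(x in S) nu x| <= cut_flow S pi.
Proof.
case=> pi0 pi_mu pi_nu.
have -> : \sum_(x in S) mu x = \sum_a \sum_b (a \in S)%:R * pi a b.
  rewrite big_mkcond; apply: eq_bigr => a _; rewrite -mulr_sumr pi_mu.
  by case: (a \in S); rewrite ?mul1r ?mul0r.
have -> : \sum_(x in S) nu x = \sum_a \sum_b (b \in S)%:R * pi a b.
  rewrite [RHS]exchange_big big_mkcond; apply: eq_bigr => b _ /=.
  by rewrite -mulr_sumr pi_nu; case: (b \in S); rewrite ?mul1r ?mul0r.
rewrite -sumrB; under eq_bigr do rewrite -sumrB.
apply: le_trans (ler_norm_sum _ _ _) _; apply: ler_sum => a _.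
apply: le_trans (ler_norm_sum _ _ _) _; apply: ler_sum => b _.
rewrite -mulrBl normrM (ger0_norm (pi0 a b)) ler_wpM2r //.
by case: (a \in S); case: (b \in S); rewrite /= ?subrr ?subr0 ?sub0r ?normrN ?normr0 ?normr1.
Qed.

Lemma coupling_add_delta mu nu pi a b t : 0 <= t ->
  coupling (fun x => mu x - t * (x == a)%:R) (fun y => nu y - t * (y == b)%:R) pi ->
  coupling mu nu (fun x y => pi x y + t * ((x == a) && (y == b))%:R).
Proof.
move=> t0 [pi0 pi_mu pi_nu]; split.
- by move=> x y; rewrite addr_ge0 // mulr_ge0.
- move=> x; rewrite big_split /= pi_mu -mulr_sumr.
  case: (x =P a) => [->|_] /=; first by rewrite (@sumr_delta _ _ predT) mulr1 subrK.
  by rewrite big1 // mulr0 subr0 addr0.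
- move=> y; rewrite big_split /= pi_nu -mulr_sumr.
  case: (y =P b) => [->|_] /=.
    by under eq_bigr do rewrite andbT; rewrite (@sumr_delta _ _ predT) mulr1 subrK.
  by rewrite big1 => [|x]; rewrite ?andbF // mulr0 subr0 addr0.
Qed.

End Couplings.

Section TightCoupling.
Variables (R : realFieldType) (N : nat) (I : finType) (G : I -> {set 'I_N}).
Hypothesis G_laminar : forall u v x, x \in G u -> x \in G v ->
  G u \subset G v \/ G v \subset G u.
Implicit Types (mu nu : 'I_N -> R) (pi : 'I_N -> 'I_N -> R).

Definition tight_coupling mu nu pi :=
  coupling mu nu pi /\
  forall v, cut_flow (G v) pi = `|\sum_(x in G v) mu x - \sum_(x in G v) nu x|.

Definition common_sets (p q : 'I_N) : {set I} := [set u | (p \in G u) && (q \in G u)].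

Lemma common_setsC p q : common_sets p q = common_sets q p.
Proof. by apply/setP => u; rewrite !inE andbC. Qed.

Lemma common_sets_proper p q r v : p \in G v -> q \notin G v -> r \in G v ->
  common_sets p q \proper common_sets p r.
Proof.
move=> pv qv rv; apply/properP; split.
  apply/subsetP => u; rewrite !inE => /andP[pu qu]; rewrite pu /=.
  case: (G_laminar pu pv) => /subsetP sub; last exact: sub.
  by rewrite (sub q qu) in qv.
by exists v; rewrite !inE ?pv ?rv // (negbTE qv) andbF.
Qed.

(* The witness maximizes, over pairs of support points, the number of sets
   containing both. *)
Lemma exists_separated_pair mu nu a0 b0 : mu a0 != 0 -> nu b0 != 0 ->
  exists a, exists b, [/\ mu a != 0, nu b != 0,
    forall v, a \in G v -> b \notin G v -> {in G v, forall x, nu x = 0} &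
    forall v, b \in G v -> a \notin G v -> {in G v, forall x, mu x = 0}].
Proof.
move=> mu_a0 nu_b0.
pose P (p : 'I_N * 'I_N) := (mu p.1 != 0) && (nu p.2 != 0).
have P0 : P (a0, b0) by rewrite /P mu_a0 nu_b0.
case: (arg_maxnP (fun p => #|common_sets p.1 p.2|) P0) => -[a b] /andP[/= mu_a nu_b] max_ab.
exists a, b; split=> // [v av bv | v bv av] x xv; apply/eqP; apply: contraT => x_supp.
  have := max_ab (a, x); rewrite /P /= mu_a x_supp => /(_ isT).
  by rewrite leqNgt (proper_card (common_sets_proper av bv xv)).
have := max_ab (x, b); rewrite /P /= nu_b x_supp => /(_ isT).
by rewrite /= ![common_sets _ b]common_setsC leqNgt (proper_card (common_sets_proper bv av xv)).
Qed.

Lemma tight_coupling_null mu nu : (forall x, mu x = 0) -> (forall x, nu x = 0) ->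
  tight_coupling mu nu (fun _ _ => 0).
Proof.
move=> mu0 nu0; split; first by split=> // x; rewrite big1 ?mu0 ?nu0.
move=> v; rewrite /cut_flow !big1 ?subrr ?normr0 // => x _.
by rewrite big1 // => y _; rewrite mulr0.
Qed.

Lemma tight_coupling_add_delta mu nu pi a b t :
  (forall x, 0 <= mu x) -> (forall x, 0 <= nu x) ->
  0 <= t -> t <= mu a -> t <= nu b ->
  (forall v, a \in G v -> b \notin G v -> {in G v, forall x, nu x = 0}) ->
  (forall v, b \in G v -> a \notin G v -> {in G v, forall x, mu x = 0}) ->
  tight_coupling (fun x => mu x - t * (x == a)%:R) (fun y => nu y - t * (y == b)%:R) pi ->
  tight_coupling mu nu (fun x y => pi x y + t * ((x == a) && (y == b))%:R).
Proof.
move=> mu0 nu0 t0 t_mu t_nu sep_a sep_b [pi_cpl pi_tight]; split.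
  exact: coupling_add_delta.
move=> v; rewrite cut_flowD cut_flow_delta pi_tight.
by rewrite (norm_mass_subr_delta mu0 nu0 t_mu t_nu (sep_a v) (sep_b v)).
Qed.

Lemma tight_coupling_exists mu nu :
  (forall x, 0 <= mu x) -> (forall x, 0 <= nu x) -> \sum_x mu x = \sum_x nu x ->
  exists pi, tight_coupling mu nu pi.
Proof.
move Hk : (#|supp mu| + #|supp nu|)%N => k.
elim/ltn_ind: k mu nu Hk => k IH mu nu Hk mu0 nu0 mass_eq.
case: (pickP (fun x => mu x != 0)) => [a0 mu_a0|mu_null]; last first.
  have mu_eq0 x : mu x = 0 by apply/eqP/negbFE/mu_null.
  exists (fun _ _ => 0); apply: tight_coupling_null => // x.
  have nu_mass0 : \sum_x nu x = 0 by rewrite -mass_eq big1.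
  exact: psumr_eq0P (fun y _ => nu0 y) nu_mass0 x isT.
case: (pickP (fun y => nu y != 0)) => [b0 nu_b0|nu_null]; last first.
  have mu_mass0 : \sum_x mu x = 0.
    by rewrite mass_eq big1 // => y _; apply/eqP/negbFE/nu_null.
  by move: mu_a0; rewrite (psumr_eq0P (fun x _ => mu0 x) mu_mass0) ?eqxx.
have [a [b [mu_a nu_b sep_a sep_b]]] := exists_separated_pair mu_a0 nu_b0.
pose t := Num.min (mu a) (nu b).
have t_mu : t <= mu a by rewrite ge_min lexx.
have t_nu : t <= nu b by rewrite ge_min lexx orbT.
have t0 : 0 <= t by rewrite le_min mu0 nu0.
have t_attained : (t == mu a) || (t == nu b).
  by rewrite /t; case: leP => _; rewrite eqxx ?orbT.
pose mu' x := mu x - t * (x == a)%:R; pose nu' y := nu y - t * (y == b)%:R.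
have smaller : (#|supp mu'| + #|supp nu'| < k)%N.
  move: (card_supp_subr_delta t mu_a) (card_supp_subr_delta t nu_b).
  by rewrite -/mu' -/nu' -Hk; case/orP: t_attained => -> /=; lia.
have mass_eq' : \sum_x mu' x = \sum_x nu' x.
  by rewrite !sumrB -!mulr_sumr !(@sumr_delta _ _ predT) mass_eq.
have [pi pi_tight] := IH _ smaller mu' nu' erefl
  (subr_delta_ge0 mu0 t_mu) (subr_delta_ge0 nu0 t_nu) mass_eq'.
by exists (fun x y => pi x y + t * ((x == a) && (y == b))%:R); apply: tight_coupling_add_delta.
Qed.

End TightCoupling.

Lemma connect_last_step (T : finType) (e : rel T) u x :
  connect e u x -> u != x -> exists2 p, connect e u p & e p x.
Proof.
case/connectP=> s; case/lastP: s => [|s y] /=; first by move=> _ ->; rewrite eqxx.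
rewrite rcons_path last_rcons => /andP[us sy] -> _.
by exists (last u s) => //; apply/connectP; exists s.
Qed.

Section Subtrees.
Variables (R : realFieldType) (N : nat) (A : 'M[R]_N).
Hypothesis A_tree : soft_tree A.

Lemma edge_ltn i j : A i j = 1 -> (i < j)%N.
Proof.
case: A_tree => _ A_up _ Aij; rewrite ltnNge; apply/negP => ji.
by move: Aij; rewrite A_up // => /eqP; rewrite eq_sym oner_eq0.
Qed.

Lemma edge_parent_uniq p q x : A p x = 1 -> A q x = 1 -> p = q.
Proof.
case: A_tree => A01 _ A_col px qx; apply/eqP; apply: contraT => pq.
have : 1 + 1 <= \sum_i A i x.
  rewrite (bigD1 p) //= (bigD1 q) 1?eq_sym //= px qx addrA lerDl.
  by apply: sumr_ge0 => i _; case/andP: (A01 i x).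
by rewrite A_col; case: ifP => _ two_le; lra.
Qed.

Lemma Gamma_sub u x : x \in Gamma A u -> Gamma A x \subset Gamma A u.
Proof. by rewrite inE => ux; apply/subsetP => y; rewrite !inE; apply: connect_trans. Qed.

Lemma Gamma_parent u x : x \in Gamma A u -> u != x ->
  exists2 p, p \in Gamma A u & A p x = 1.
Proof.
rewrite inE => ux u_x; have [p up /eqP px] := connect_last_step ux u_x.
by exists p; rewrite ?inE.
Qed.

Lemma Gamma_leq u x : x \in Gamma A u -> (u <= x)%N.
Proof.
rewrite inE => /connectP[s path_s ->]; elim: s u path_s => [|y s IH] u //=.
case/andP=> /eqP uy ys; exact: leq_trans (ltnW (edge_ltn uy)) (IH y ys).
Qed.

Lemma Gamma_child p y u : A p y = 1 ->
  (y \in Gamma A u) = (u == y) || (p \in Gamma A u).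
Proof.
move=> py; apply/idP/orP => [uy|[/eqP <-|]].
- have [_|u_y] := eqVneq u y; first by left.
  by right; have [q uq qy] := Gamma_parent uy u_y; rewrite -(edge_parent_uniq qy py).
- by rewrite inE connect0.
- by rewrite !inE => pu; apply: connect_trans pu (connect1 _); rewrite /= py.
Qed.

Lemma Gamma_orphan y u : (forall p, A p y != 1) -> (y \in Gamma A u) = (u == y).
Proof.
move=> orphan; apply/idP/eqP => [uy|<-]; last by rewrite inE connect0.
apply/eqP; apply: contraT => u_y.
by have [p _ py] := Gamma_parent uy u_y; move: (orphan p); rewrite py eqxx.
Qed.

Lemma Gamma_laminar u v x : x \in Gamma A u -> x \in Gamma A v ->
  Gamma A u \subset Gamma A v \/ Gamma A v \subset Gamma A u.
Proof.
move Em : (val x) => m; elim/ltn_ind: m x u v Em => m IH x u v Em ux vx.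
have [ex|u_x] := eqVneq u x; first by left; rewrite ex Gamma_sub.
have [ex|v_x] := eqVneq v x; first by right; rewrite ex Gamma_sub.
have [p _ px] := Gamma_parent ux u_x.
rewrite (Gamma_child _ px) (negbTE u_x) in ux.
rewrite (Gamma_child _ px) (negbTE v_x) in vx.
have p_x : (val p < m)%N by rewrite -Em; apply: edge_ltn px.
exact: IH p_x p u v erefl ux vx.
Qed.

Lemma alpha_tree v x : (forall i j, A i j = 0 \/ A i j = 1) ->
  alpha A v x = (x \in Gamma A v)%:R.
Proof.
move=> A01; pose M := \matrix_(u, y) (y \in Gamma A u)%:R : 'M[R]_N.
have M_inv : M *m (1%:M - A) = 1%:M.
  apply/matrixP => u y; rewrite mulmxBr mulmx1 !mxE.
  under eq_bigr do rewrite mxE.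
  have [p /eqP py|orphan] := pickP (fun p => A p y == 1).
  - rewrite (bigD1 p) //= big1 => [|q qp]; last first.
      case: (A01 q y) => [->|qy]; first by rewrite mulr0.
      by rewrite (edge_parent_uniq qy py) eqxx in qp.
    rewrite py mulr1 addr0 (Gamma_child _ py).
    have [uy|_] := eqVneq u y; last by rewrite subrr.
    have p_notin : p \notin Gamma A u.
      by rewrite uy; apply: contraL (edge_ltn py) => /Gamma_leq; rewrite -leqNgt.
    by rewrite (negbTE p_notin) subr0.
  - rewrite big1 => [|q _]; first by rewrite subr0 Gamma_orphan // => p; rewrite orphan.
    by case: (A01 q y) => [->|qy]; [rewrite mulr0 | move: (orphan q); rewrite qy eqxx].
have inv_M : invmx (1%:M - A) = M.
  case: A_tree => _ A_up _.
  by rewrite -[LHS]mul1mx -{1}M_inv -mulmxA mulmxV ?mulmx1 ?unitmx_1B_strict_upper.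
by rewrite /alpha inv_M mxE.
Qed.

End Subtrees.

Section TreeWasserstein.
Variables (R : realFieldType) (N : nat) (A : 'M[R]_N) (w : 'I_N -> R).
Implicit Types mu nu : 'I_N -> R.

Lemma transport_cost_tree_dist pi :
  transport_cost (tree_dist A w) pi = \sum_v w v * cut_flow (Gamma A v) pi.
Proof.
rewrite /transport_cost /tree_dist /cut_flow.
under eq_bigr => a _ do under eq_bigr => b _ do rewrite mulr_suml.
under eq_bigr => a _ do rewrite exchange_big.
rewrite exchange_big; apply: eq_bigr => v _.
rewrite mulr_sumr; apply: eq_bigr => a _.
by rewrite mulr_sumr; apply: eq_bigr => b _; rewrite mulrA.
Qed.

Lemma is_W1_tree_dist mu nu : soft_tree A -> (forall v, 0 <= w v) ->
  (forall x, 0 <= mu x) -> (forall x, 0 <= nu x) -> \sum_x mu x = \sum_x nu x ->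
  is_W1 (tree_dist A w) mu nu
    (\sum_v w v * `|\sum_(x in Gamma A v) mu x - \sum_(x in Gamma A v) nu x|).
Proof.
move=> A_tree w0 mu0 nu0 mass_eq; split.
  have [pi [pi_cpl pi_tight]] := tight_coupling_exists (Gamma_laminar A_tree) mu0 nu0 mass_eq.
  exists pi; split => //.
  by rewrite transport_cost_tree_dist; apply: eq_bigr => v _; rewrite pi_tight.
move=> pi pi_cpl; rewrite transport_cost_tree_dist; apply: ler_sum => v _.
by rewrite ler_wpM2l ?coupling_cut_flow_ge.
Qed.

Lemma W_relax_tree n mu nu : soft_tree A -> (forall i j, A i j = 0 \/ A i j = 1) ->
  (forall x, ~~ is_leaf n x -> mu x = 0) -> (forall x, ~~ is_leaf n x -> nu x = 0) ->
  W_relax n A w mu nu =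
    \sum_v w v * `|\sum_(x in Gamma A v) mu x - \sum_(x in Gamma A v) nu x|.
Proof.
move=> A_tree A01 muL nuL; apply: eq_bigr => v _; congr (_ * `|_|).
rewrite -sumrB big_mkcond [RHS]big_mkcond; apply: eq_bigr => x _ /=.
rewrite alpha_tree //; have [lx|/[dup]/muL -> /nuL ->] := boolP (is_leaf n x).
  by case: (x \in Gamma A v); rewrite ?mul1r ?mul0r.
by rewrite subrr; case: ifP.
Qed.

End TreeWasserstein.

Theorem theorem4 (R : realFieldType) (N n : nat) (A : 'M[R]_N) (w : 'I_N -> R) :
  soft_tree A -> leaf_rows_zero n A -> (forall v, 0 < w v) ->
  (* W_relax is a metric on probability measures supported on the leaves *)
  ((forall mu nu, prob_on_leaves n mu -> prob_on_leaves n nu ->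
       0 <= W_relax n A w mu nu /\
       W_relax n A w mu nu = W_relax n A w nu mu /\
       (W_relax n A w mu nu = 0 <-> mu = nu)) /\
   (forall mu nu rho, prob_on_leaves n mu -> prob_on_leaves n nu ->
       prob_on_leaves n rho ->
       W_relax n A w mu rho <= W_relax n A w mu nu + W_relax n A w nu rho)) /\
  (* 0/1 case: equals the Tree-Wasserstein distance *)
  ((forall i j, A i j = 0 \/ A i j = 1) ->
   forall mu nu, prob_on_leaves n mu -> prob_on_leaves n nu ->
     is_W1 (tree_dist A w) mu nu (W_relax n A w mu nu) /\
     W_relax n A w mu nu =
       \sum_v w v * `| \sum_(x in Gamma A v) mu x - \sum_(x in Gamma A v) nu x |).
Proof.
move=> A_tree A_leaf w_gt0; have w_ge0 v := ltW (w_gt0 v).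
split; [split|].
- move=> mu nu [_ _ muL] [_ _ nuL]; split; first exact: W_relax_ge0.
  split; first exact: W_relax_sym.
  split=> [W0|<-]; last exact: W_relax_xx.
  exact/(eq_on_leaves muL nuL)/(W_relax_eq0 A_tree A_leaf w_gt0 W0).
- by move=> mu nu rho _ _ _; apply: W_relax_triangle.
- move=> A01 mu nu [mu0 mu1 muL] [nu0 nu1 nuL].
  rewrite (W_relax_tree _ A_tree A01 muL nuL); split => //.
  by apply: is_W1_tree_dist; rewrite ?mu1 ?nu1.
Qed.
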